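(* Let $H_{ij}$, $i=1,\ldots,b$, $j=1,\ldots,s_i$, be $n=\sum_i s_i$ null hypotheses with $p$-values $P_{ij}$, where true-null $p$-values are $U(0,1)$ and the rows $(P_{i1},\ldots,P_{is_i})$, $i=1,\ldots,b$, are mutually independent (arbitrary dependence within rows). Let $n_0\ge1$ be the number of true nulls, $s_{\max}=\max_i s_i$, and $R(\lambda)=\sum_{i=1}^b\sum_{j=1}^{s_i}I(P_{ij}\le\lambda)$. For any $\lambda$ with $(2b+3)^{-2/(b+2)}\le\lambda<1$, the estimator $$\widehat n_0^{(1)}(\mathbf P)=\frac{n-R(\lambda)+s_{\max}}{1-\lambda}$$ satisfies Property 1, i.e. it is non-decreasing in each $P_{ij}$ and $$\sum_{i=1}^b\sum_{j=1}^{s_i}I(H_{ij}=0)\,E_{DU}\left\{\frac{1}{\widehat n_0^{(1)}(\mathbf P^{(-i)},\mathbf 0)}\right\}\le 1.$$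
   Context: $H_{ij}=0$ means $H_{ij}$ is true. $\mathbf P=((P_{ij}))$ is the collection of all $p$-values; $\mathbf P^{(-i)}$ is the collection with the $i$th row deleted, and $\widehat n_0(\mathbf P^{(-i)},\mathbf 0)$ is the value of $\widehat n_0(\mathbf P)$ when all entries of the $i$th row are replaced by $0$. $E_{DU}$ denotes expectation under the Dirac-uniform configuration of $\mathbf P^{(-i)}$: the $p$-values in $\mathbf P^{(-i)}$ corresponding to false null hypotheses are set to $0$, and the remaining ones are $U(0,1)$ distributed, with the rows still mutually independent. An estimator $\widehat n_0(\mathbf P)$ is said to satisfy Property 1 if it is non-decreasing in each $P_{ij}$ and satisfies the displayed inequality. *)

From HB Require Import structures.
From mathcomp Require Import all_boot all_order all_algebra.
From mathcomp Require Import all_classical all_reals all_analysis.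
Set Implicit Arguments. Unset Strict Implicit. Unset Printing Implicit Defensive.
Import Order.TTheory GRing.Theory Num.Theory.
Local Open Scope classical_set_scope.
Local Open Scope ring_scope.

(* Hypotheses are indexed by rows k : 'I_b and columns j : 'I_(s k).
   A matrix of p-values is a dependent function  forall k, 'I_(s k) -> R. *)
Definition pmat (R : Type) (b : nat) (s : 'I_b -> nat) :=
  forall k : 'I_b, 'I_(s k) -> R.

Definition ntot (b : nat) (s : 'I_b -> nat) : nat := (\sum_(k < b) s k)%N.
Definition smax (b : nat) (s : 'I_b -> nat) : nat := (\max_(k < b) s k)%N.

Definition Rcount (R : realType) (b : nat) (s : 'I_b -> nat) (lam : R)
  (P : pmat R s) : nat :=
  (\sum_(k < b) \sum_(j < s k) nat_of_bool (P k j <= lam)%R)%N.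

Definition n0hat1 (R : realType) (b : nat) (s : 'I_b -> nat) (lam : R)
  (P : pmat R s) : R :=
  ((ntot s)%:R - (Rcount lam P)%:R + (smax s)%:R) / (1 - lam).

Definition upd (R : Type) (b : nat) (s : 'I_b -> nat) (P : pmat R s)
  (k : 'I_b) (j : 'I_(s k)) (x : R) : pmat R s :=
  fun k' j' => if (k' == k) && (val j' == val j) then x else P k' j'.

(* number of true nulls n0; H k j = true means H_kj is true (H_kj = 0) *)
Arguments upd {R b s} P k j x _ _.

Definition n0 (b : nat) (s : 'I_b -> nat) (H : forall k, 'I_(s k) -> bool) : nat :=
  (\sum_(k < b) \sum_(j < s k) nat_of_bool (H k j))%N.

(* Dirac-uniform configuration of (P^(-i), 0): row i replaced by zeros,
   false-null p-values set to 0, true-null p-values given by U. *)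
Definition DU_zero_row (T : Type) (R : realType) (b : nat) (s : 'I_b -> nat)
  (H : forall k, 'I_(s k) -> bool) (U : forall k, 'I_(s k) -> T -> R)
  (i : 'I_b) (t : T) : pmat R s :=
  fun k j => if k == i then 0 else if H k j then U k j t else 0.

Definition uniform01 d (T : measurableType d) (R : realType)
  (P : probability T R) (X : T -> R) : Prop :=
  measurable_fun setT X /\
  forall x : R, 0 <= x <= 1 -> P [set t | X t <= x] = x%:E.

(* The rows (U_k1, ..., U_ks_k) (true-null entries) are mutually independent:
   product rule for every finite subfamily of rows and every choice of
   measurable sets for the coordinates (rectangles generate the row sigma-algebra;
   arbitrary dependence within rows is allowed). *)
Definition rows_independent d (T : measurableType d) (R : realType)
  (P : probability T R) (b : nat) (s : 'I_b -> nat)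
  (H : forall k, 'I_(s k) -> bool) (U : forall k, 'I_(s k) -> T -> R) : Prop :=
  forall (S : {set 'I_b}) (B : forall k, 'I_(s k) -> set R),
    (forall k j, measurable (B k j)) ->
    P (\big[setI/setT]_(k in S) \big[setI/setT]_(j < s k | H k j)
          [set t | B k j (U k j t)]) =
    (\prod_(k in S)
       P (\big[setI/setT]_(j < s k | H k j) [set t | B k j (U k j t)]))%E.

(* Under the Dirac-uniform configuration with row i set to 0, n - R(lam) counts the
   true nulls outside row i whose p-value exceeds lam, so
   1 / n0hat(P^(-i), 0) = (1 - lam) / (C_(-i) + s_max).  Row i is independent of C_(-i)
   and P(U_ij > lam) = 1 - lam, so for a true null H_ij the factor 1 - lam can be traded
   for the indicator of U_ij > lam.  The resulting sum over i, j is bounded pointwise: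
   if c_i is the number of exceedances in row i, then c_i <= s_max gives
   sum_i c_i / (C_(-i) + s_max) <= sum_i c_i / sum_k c_k <= 1.
   The pattern of exceedances takes finitely many values, so every expectation is a finite
   sum over patterns. *)

From HB Require Import structures.
From mathcomp Require Import all_boot all_order all_algebra.
From mathcomp Require Import all_classical all_reals all_analysis.
From mathcomp Require Import measurable_realfun ring.
Import Order.TTheory GRing.Theory Num.Theory.
Local Open Scope classical_set_scope.
Local Open Scope ring_scope.

Lemma bigsetIP (T : Type) (I : finType) (P : pred I) (F : I -> set T) (t : T) :
  (\big[setI/setT]_(i | P i) F i) t <-> (forall i, P i -> F i t).
Proof.
rewrite -bigcap_seq_cond; split=> [h i Pi|h i /andP[_ /h//]].
by apply: h; rewrite /= mem_index_enum.
Qed.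

Section FiniteValuedExpectation.
Context {d} {T : measurableType d} {R : realType} (P : probability T R).
Context {V : finType} {X : T -> V}.
Hypothesis mX : forall v, measurable [set t | X t = v].

Lemma measurable_fiber_comp {W : Type} (f : V -> W) (u : W) :
  measurable [set t | f (X t) = u].
Proof.
have -> : [set t | f (X t) = u] = \bigcup_(v in [set v | f v = u]) [set t | X t = v].
  by apply/seteqP; split=> t /= => [<-|[v /= <- ->]] //; exists (X t).
by apply: fin_bigcup_measurable => //; exact: finite_finset.
Qed.

Lemma expectation_fin_valued (psi : V -> R) : (forall v, 0 <= psi v) ->
  ('E_P[fun t => psi (X t)] = \sum_v (psi v)%:E * P [set t | X t = v])%E.
Proof.
move=> psi0; rewrite unlock.
transitivity (\int[P]_t \sum_v ((psi v)%:E * (\1_[set t | X t = v] t)%:E))%E.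
  apply: eq_integral => t _; under eq_bigr do rewrite -EFinM.
  rewrite sumEFin; congr EFin.
  rewrite (bigD1 (X t)) //= indicE mem_set // mulr1 big1 ?addr0 // => v vX.
  by rewrite indicE memNset ?mulr0 //= => Xv; rewrite Xv eqxx in vX.
rewrite ge0_integral_sum //; first last.
- by move=> v t _; rewrite mule_ge0 // lee_fin.
- move=> v; apply/measurable_EFinP/measurable_funM => //.
apply: eq_bigr => v _; rewrite ge0_integralZl_EFin //.
  by rewrite integral_indic // setIT.
exact/measurable_EFinP/measurable_indic.
Qed.

Lemma sum_fiber_prob : \sum_v fine (P [set t | X t = v]) = 1.
Proof.
apply: EFin_inj; rewrite -sumEFin.
have := @expectation_fin_valued (fun=> 1) (fun=> ler01).
rewrite (expectation_cst P 1) => ->.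
by apply: eq_bigr => v _; rewrite mul1e fineK // fin_num_measure.
Qed.

End FiniteValuedExpectation.

Lemma sum_share_le1 (R : numFieldType) (I : finType) (c D : I -> R) (m : R) :
  (forall i, 0 <= c i) -> (forall i, c i <= m) ->
  (forall i, \sum_(k | k != i) c k <= D i) ->
  \sum_i c i / (D i + m) <= 1.
Proof.
move=> c_ge0 c_le D_ge; pose C := \sum_i c i.
have term i : c i / (D i + m) <= c i / C.
  have [->|ci_neq0] := eqVneq (c i) 0; first by rewrite !mul0r.
  have ci_gt0 : 0 < c i by rewrite lt_def ci_neq0 c_ge0.
  have C_le : C <= D i + m by rewrite /C (bigD1 i) //= addrC lerD.
  have C_gt0 : 0 < C.
    by apply: (lt_le_trans ci_gt0); rewrite /C (bigD1 i) //= lerDl sumr_ge0.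
  by rewrite ler_wpM2l // lef_pV2 // posrE (lt_le_trans C_gt0).
apply: le_trans (ler_sum _ (fun i _ => term i)) _.
rewrite -mulr_suml -/C; have [->|C_neq0] := eqVneq C 0; first by rewrite mul0r.
by rewrite mulfV.
Qed.

Lemma n0hat1_upd_nondecreasing (R : realType) (b : nat) (s : 'I_b -> nat)
    (lam : R) (P : pmat R s) (k : 'I_b) (j : 'I_(s k)) (x y : R) :
  lam < 1 -> x <= y -> n0hat1 lam (upd P k j x) <= n0hat1 lam (upd P k j y).
Proof.
move=> lam_lt1 le_xy.
have le_Rcount : (Rcount lam (upd P k j y) <= Rcount lam (upd P k j x))%N.
  apply: leq_sum => k' _; apply: leq_sum => j' _; rewrite /upd.
  by case: ifP => // _; case: (boolP (y <= lam)) => [/(le_trans le_xy) ->|].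
rewrite /n0hat1; apply: ler_wpM2r; first by rewrite invr_ge0 subr_ge0 ltW.
by rewrite lerD2r lerB // ler_nat.
Qed.

Section Markings.
Context {b : nat} {s : 'I_b -> nat}.

Local Notation cell := {k : 'I_b & 'I_(s k)}.
Local Notation at_cell j := (Tagged (fun k => 'I_(s k)) j).

Definition nmarked (w : {ffun cell -> bool}) : nat :=
  (\sum_(k < b) \sum_(j < s k) w (at_cell j))%N.

Definition drop_row (i : 'I_b) (w : {ffun cell -> bool}) : {ffun cell -> bool} :=
  [ffun y => (tag y != i) && w y].

Lemma marked_share_le1 (R : numFieldType) (H : forall k, 'I_(s k) -> bool)
    (w : {ffun cell -> bool}) :
  \sum_(i < b) \sum_(j < s i | H i j)
     (w (at_cell j))%:R / ((nmarked (drop_row i w))%:R + (smax s)%:R) <= 1 :> R.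
Proof.
pose c k : R := \sum_(j < s k | H k j) (w (at_cell j))%:R.
under eq_bigr do rewrite -mulr_suml -/(c _).
apply: sum_share_le1 => [k|k|i]; rewrite /c -?natr_sum ?ler_nat //.
- apply: leq_trans (leq_bigmax k).
  apply: (@leq_trans (\sum_(j < s k | H k j) 1)).
    by apply: leq_sum => j _; exact: leq_b1.
  by rewrite sum1dep_card -[leqRHS]card_ord max_card.
- under eq_bigr do rewrite -natr_sum.
  rewrite -natr_sum ler_nat /nmarked [leqRHS](bigID (fun k => k != i)) /=.
  apply: leq_trans (leq_addr _ _); apply: leq_sum => k ki.
  rewrite big_mkcond; apply: leq_sum => j _; rewrite ffunE /= ki.
  by case: (H k j).
Qed.

Definition exceedances {R : realType} (H : forall k, 'I_(s k) -> bool) {T : Type}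
    (U : forall k, 'I_(s k) -> T -> R) (lam : R) (t : T) : {ffun cell -> bool} :=
  [ffun y => H (tag y) (tagged y) && (lam < U (tag y) (tagged y) t)].

Lemma n0hat1_DU_zero_row (R : realType) (H : forall k, 'I_(s k) -> bool) (T : Type)
    (U : forall k, 'I_(s k) -> T -> R) (lam : R) (i : 'I_b) (t : T) :
  0 <= lam ->
  (n0hat1 lam (DU_zero_row H U i t))^-1 =
  (1 - lam) / ((nmarked (drop_row i (exceedances H U lam t)))%:R + (smax s)%:R).
Proof.
move=> lam_ge0.
have ntot_split : ntot s =
    (Rcount lam (DU_zero_row H U i t) + nmarked (drop_row i (exceedances H U lam t)))%N.
  rewrite /ntot /Rcount /nmarked -big_split; apply: eq_bigr => k _.
  rewrite -big_split -[LHS]card_ord -sum1_card; apply: eq_bigr => j _.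
  rewrite !ffunE /DU_zero_row /=; case: (k == i) => /=; first by rewrite lam_ge0.
  by case: (H k j) => /=; [case: leP | rewrite lam_ge0].
by rewrite /n0hat1 ntot_split natrD (addrC (Rcount _ _)%:R) addrK invf_div.
Qed.

End Markings.

Section RowIndependence.
Context {d} {T : measurableType d} {R : realType} {P : probability T R}.
Context {b : nat} {s : 'I_b -> nat} {H : forall k, 'I_(s k) -> bool}.
Context {U : forall k, 'I_(s k) -> T -> R}.
Hypothesis U_indep : rows_independent P H U.

Local Notation cell := {k : 'I_b & 'I_(s k)}.
Local Notation at_cell j := (Tagged (fun k => 'I_(s k)) j).

Definition row_event (B : forall k, 'I_(s k) -> set R) (k : 'I_b) : set T :=
  \big[setI/setT]_(j < s k | H k j) [set t | B k j (U k j t)].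

Lemma rows_independent_split (B : forall k, 'I_(s k) -> set R) (i : 'I_b) :
  (forall k j, measurable (B k j)) ->
  P (row_event B i `&` \big[setI/setT]_(k in [set~ i]%SET) row_event B k) =
  (P (row_event B i) * P (\big[setI/setT]_(k in [set~ i]%SET) row_event B k))%E.
Proof.
move=> mB.
have -> : row_event B i `&` \big[setI/setT]_(k in [set~ i]%SET) row_event B k =
          \big[setI/setT]_(k in [set: 'I_b]%SET) row_event B k.
  rewrite [RHS](bigD1 i) ?inE //=; congr (_ `&` _).
  by apply: eq_bigl => k; rewrite !inE.
rewrite /row_event !U_indep // (bigD1 i) ?inE //=; congr (_ * _)%E.
by apply: eq_bigl => k; rewrite !inE.
Qed.

Context {lam : R}.
Hypothesis U_unif : forall k j, H k j -> uniform01 P (U k j).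

Local Notation exc := (exceedances H U lam).

Lemma measurable_lt_pattern (be : bool) : measurable [set u : R | (lam < u) = be].
Proof.
rewrite -[X in measurable X]setTI.
exact: (@measurable_fun_ltr _ _ _ _ _ _ (measurable_cst lam) (@measurable_id _ _ setT)
  measurableT [set be] I).
Qed.

Lemma measurable_exceedances_cell (y : cell) (be : bool) :
  measurable [set t | exc t y = be].
Proof.
case: y => k j; rewrite -[X in measurable X]setTI.
under eq_set do rewrite ffunE /=.
case Hkj: (H k j) => /=; first have [mU _] := U_unif _ _ Hkj.
- exact: (@measurable_fun_ltr _ _ _ _ _ _ (measurable_cst lam) mU
    measurableT [set be] I).
- exact: (@measurable_cst _ _ _ _ _ false measurableT [set be] I).
Qed.

Lemma measurable_exceedances_fiber (w : {ffun cell -> bool}) :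
  measurable [set t | exc t = w].
Proof.
have -> : [set t | exc t = w] = \bigcap_(y in setT) [set t | exc t y = w y].
  by apply/seteqP; split=> [t <- //|t /= exc_w]; apply/ffunP => y; exact: exc_w.
apply: fin_bigcap_measurable => [|y _]; first exact: finite_finset.
exact: measurable_exceedances_cell.
Qed.

Hypothesis lam01 : 0 <= lam <= 1.

Lemma prob_exceedances_cell {i : 'I_b} (j : 'I_(s i)) (be : bool) : H i j ->
  P [set t | exc t (at_cell j) = be] = (if be then 1 - lam else lam)%:E.
Proof.
move=> Hij; have [_ /(_ lam lam01) U_cdf] := U_unif _ _ Hij.
have not_exc : [set t | exc t (at_cell j) = false] = [set t | U i j t <= lam].
  by apply/seteqP; split=> t /=; rewrite ffunE /= Hij /= ltNge; case: (_ <= _).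
case: be; last by rewrite not_exc U_cdf.
have -> : [set t | exc t (at_cell j) = true] = ~` [set t | exc t (at_cell j) = false].
  by apply/seteqP; split=> t /=; case: (exc t _).
rewrite probability_setC; last exact: measurable_exceedances_cell.
by rewrite not_exc U_cdf EFinB.
Qed.

Definition cell_pattern {i : 'I_b} (j0 : 'I_(s i)) (be : bool) (w : {ffun cell -> bool})
    (k : 'I_b) (j : 'I_(s k)) : set R :=
  if k == i then (if val j == val j0 then [set u | (lam < u) = be] else setT)
  else [set u | (lam < u) = w (at_cell j)].

Lemma measurable_cell_pattern {i : 'I_b} (j0 : 'I_(s i)) (be : bool)
    (w : {ffun cell -> bool}) {k : 'I_b} (j : 'I_(s k)) :
  measurable (cell_pattern j0 be w k j).
Proof.
rewrite /cell_pattern; case: ifP => _; last exact: measurable_lt_pattern.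
by case: ifP => _; [exact: measurable_lt_pattern|exact: measurableT].
Qed.

Lemma row_event_cell_pattern_self {i : 'I_b} (j0 : 'I_(s i)) (be : bool)
    (w : {ffun cell -> bool}) : H i j0 ->
  row_event (cell_pattern j0 be w) i = [set t | exc t (at_cell j0) = be].
Proof.
move=> Hij0; apply/seteqP; split=> t /=.
  by move/bigsetIP => /(_ j0 Hij0); rewrite /cell_pattern !eqxx ffunE /= Hij0.
rewrite ffunE /= Hij0 => exc_be; apply/bigsetIP => j _; rewrite /cell_pattern eqxx.
by case: eqP => [/val_inj ->|].
Qed.

Lemma row_event_cell_pattern_others {i : 'I_b} (j0 : 'I_(s i)) (be : bool)
    (w : {ffun cell -> bool}) :
  (forall y, w y -> (tag y != i) && H (tag y) (tagged y)) ->
  \big[setI/setT]_(k in [set~ i]%SET) row_event (cell_pattern j0 be w) k =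
  [set t | drop_row i (exc t) = w].
Proof.
move=> w_supp; apply/seteqP; split=> t /=; last first.
  move=> <-; apply/bigsetIP => k; rewrite !inE => ki; apply/bigsetIP => j Hkj.
  by rewrite /cell_pattern (negbTE ki) /= !ffunE /= ki Hkj.
move/bigsetIP => rows; apply/ffunP => -[k j]; rewrite !ffunE /=.
have w_out : ~~ ((k != i) && H k j) -> w (at_cell j) = false.
  by apply: contraNF; exact: w_supp.
case ki: (k == i) => /=; first by rewrite w_out ?ki.
move: (rows k); rewrite !inE ki => /(_ isT) /bigsetIP row_k.
case Hkj: (H k j) => /=; last by rewrite w_out ?Hkj ?andbF.
by have := row_k j Hkj; rewrite /cell_pattern ki.
Qed.

Lemma exceedances_cell_indep_drop_row {i : 'I_b} (j0 : 'I_(s i)) (be : bool)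
    (w : {ffun cell -> bool}) :
  H i j0 ->
  P [set t | (exc t (at_cell j0), drop_row i (exc t)) = (be, w)] =
  (P [set t | exc t (at_cell j0) = be] * P [set t | drop_row i (exc t) = w])%E.
Proof.
move=> Hij0.
have -> : [set t | (exc t (at_cell j0), drop_row i (exc t)) = (be, w)] =
    [set t | exc t (at_cell j0) = be] `&` [set t | drop_row i (exc t) = w].
  by apply/seteqP; split=> t /= => [[-> ->]|[-> ->]].
have [/forallP w_supp|] := boolP [forall y, w y ==> (tag y != i) && H (tag y) (tagged y)].
  rewrite -(row_event_cell_pattern_self j0 be w Hij0).
  rewrite -(row_event_cell_pattern_others j0 be w (fun y => implyP (w_supp y))).
  by apply: rows_independent_split => // k j; exact: measurable_cell_pattern.
rewrite negb_forall => /existsP[y]; rewrite negb_imply => /andP[wy y_out].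
suff -> : [set t | drop_row i (exc t) = w] = set0 by rewrite setI0 !measure0 mule0.
apply/seteqP; split=> t //= drop_w; move: wy y_out; rewrite -drop_w !ffunE /=.
by case/andP=> -> /andP[->].
Qed.

Lemma expectation_exceedance_factor {i : 'I_b} (j : 'I_(s i))
    (g : {ffun cell -> bool} -> R) :
  H i j -> (forall w, 0 <= g w) ->
  ('E_P[fun t => ((1 - lam) * g (drop_row i (exc t)))%R] =
   'E_P[fun t => ((exc t (at_cell j))%:R * g (drop_row i (exc t)))%R])%E.
Proof.
move=> Hij g_ge0.
have mX := measurable_fiber_comp measurable_exceedances_fiber
  (fun w : {ffun cell -> bool} => (w (at_cell j), drop_row i w)).
have one_sub_lam_ge0 : 0 <= 1 - lam by rewrite subr_ge0; case/andP: lam01.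
rewrite (expectation_fin_valued P mX (fun p => (1 - lam) * g p.2)); last first.
  by move=> p; rewrite mulr_ge0.
rewrite (expectation_fin_valued P mX (fun p => p.1%:R * g p.2)); last first.
  by move=> p; rewrite mulr_ge0.
have sum_pairs (F : bool * {ffun cell -> bool} -> \bar R) :
    (\sum_p F p = \sum_(be : bool) \sum_w F (be, w))%E.
  by rewrite pair_bigA; apply: eq_bigr => -[].
rewrite !sum_pairs !big_bool -!big_split /=.
apply: eq_bigr => w _.
rewrite !exceedances_cell_indep_drop_row // !prob_exceedances_cell //.
have mw : measurable [set t | drop_row i (exc t) = w].
  exact: (measurable_fiber_comp measurable_exceedances_fiber (drop_row i)).
rewrite -(fineK (fin_num_measure P _ mw)) -!EFinM -!EFinD; congr EFin; ring.
Qed.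

Lemma expectation_inv_n0hat1_DU {i : 'I_b} (j : 'I_(s i)) :
  H i j ->
  ('E_P[fun t => ((n0hat1 lam (DU_zero_row H U i t))^-1)%R] =
   (\sum_(w : {ffun cell -> bool})
      (w (at_cell j))%:R / ((nmarked (drop_row i w))%:R + (smax s)%:R)
        * fine (P [set t | exc t = w]))%:E)%E.
Proof.
move=> Hij.
pose g (w : {ffun cell -> bool}) := ((nmarked w)%:R + (smax s)%:R : R)^-1.
have g_ge0 w : 0 <= g w by rewrite invr_ge0 addr_ge0.
transitivity ('E_P[fun t => ((1 - lam) * g (drop_row i (exc t)))%R])%E.
  by congr expectation; apply/funext => t; rewrite n0hat1_DU_zero_row //; case/andP: lam01.
rewrite (expectation_exceedance_factor j) //.
rewrite (expectation_fin_valued P measurable_exceedances_fiber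
  (fun w => (w (at_cell j))%:R * g (drop_row i w))); last by move=> w; rewrite mulr_ge0.
rewrite -sumEFin; apply: eq_bigr => w _.
by rewrite [RHS]EFinM fineK // fin_num_measure //; exact: measurable_exceedances_fiber.
Qed.

End RowIndependence.

Theorem mainTheorem2 (R : realType) (b : nat) (s : 'I_b -> nat)
  (H : forall k : 'I_b, 'I_(s k) -> bool) (lam : R) :
  (forall k, (0 < s k)%N) ->
  (1 <= n0 H)%N ->
  ((2 * b + 3)%:R `^ (- (2 / (b + 2)%:R)) <= lam) -> lam < 1 ->
  (* non-decreasing in each P_ij *)
  (forall (P : pmat R s) (k : 'I_b) (j : 'I_(s k)) (x y : R), x <= y ->
      n0hat1 lam (upd P k j x) <= n0hat1 lam (upd P k j y)) /\
  (* the displayed inequality, for every Dirac-uniform configuration *)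
  (forall (d : measure_display) (T : measurableType d) (P : probability T R)
          (U : forall k : 'I_b, 'I_(s k) -> T -> R),
      (forall k j, H k j -> uniform01 P (U k j)) ->
      rows_independent P H U ->
      (\sum_(i < b) \sum_(j < s i | H i j)
          'E_P[fun t => ((n0hat1 lam (DU_zero_row H U i t))^-1)%R] <= 1)%E).
Proof.
move=> _ _ lam_lb lam_lt1; split=> [P k j x y|d T P U U_unif U_indep].
  exact: n0hat1_upd_nondecreasing.
have lam_gt0 : 0 < lam.
  by apply: lt_le_trans lam_lb; apply: powR_gt0; rewrite ltr0n addn3.
have lam01 : 0 <= lam <= 1 by rewrite !ltW.
under eq_bigr => i _ do under eq_bigr => j Hij do
  rewrite (expectation_inv_n0hat1_DU U_indep U_unif lam01 j Hij).
under eq_bigr do rewrite sumEFin.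
rewrite sumEFin lee_fin.
rewrite -[in leRHS](sum_fiber_prob P (measurable_exceedances_fiber (lam := lam) U_unif)).
under eq_bigr do rewrite exchange_big /=.
rewrite exchange_big /=; apply: ler_sum => w _.
under eq_bigr do rewrite -mulr_suml.
rewrite -mulr_suml ler_piMl ?fine_ge0 ?measure_ge0 //.
exact: marked_share_le1.
Qed.
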